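(* There is an absolute constant $C>0$ such that for every reduced integer $n\ge3$, $$\left|\Omega(n)-\frac{\log n}{\log\log n}\right|\le C\,\frac{\log n}{(\log\log n)^2}.$$
   Context: $\Omega(n)$ is the number of prime factors of $n$ counted with multiplicity. Let $p_i$ denote the $i$-th prime ($p_1=2$). A positive integer $\prod_i p_i^{a_i}$ (with $a_i=0$ for all sufficiently large $i$) is called reduced if $\left\lfloor\frac{a_i+1}{a_j+2}\right\rfloor<\frac{\log p_j}{\log p_i}$ for all $i,j\ne 1$, and $2^{a_1}<8p_j^2$ for every $j$ with $a_j=0$. *)

From Stdlib Require Import Reals.
From mathcomp Require Import all_boot.

Definition Omega (n : nat) : nat := \sum_(p <- primes n) logn p n.

(* n = prod_i p_i^{a_i} with a_i = logn p_i n.  Index i = 1 is the prime 2,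
   so "i, j <> 1" means the primes p, q are odd. *)
Definition reduced (n : nat) : Prop :=
  (0 < n)%N /\
  (forall p q : nat, prime p -> prime q -> p <> 2%N -> q <> 2%N ->
     Rlt (INR (divn (logn p n).+1 (logn q n).+2))
         (Rdiv (ln (INR q)) (ln (INR p)))) /\
  (forall q : nat, prime q -> logn q n = 0%N ->
     Rlt (INR (expn 2 (logn 2 n))) (Rmult 8 (pow (INR q) 2))).

(* Let P be the least odd prime not dividing n and write a_p for the exponent
   of p in n.  Testing reducedness against P (where a_P = 0) gives a_p = 0 for
   p > P, a_p log p < 2 log P for odd p < P, a_p <= 2 as soon as p^2 > P, and
   2^(a_2) < 8 P^2; minimality of P gives a_p >= 1 for odd p < P.  Hence
   log n = sum_(p<P) a_p log p and Omega(n) = sum_(p<P) a_p.  Chebyshev's bounds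
   (theta(x) <= 2x from Erdos' bound on the primorial, pi(x) log x of order x
   from the central binomial coefficient, and sum_(p<x) log (x/p) = O(x/log x))
   turn this into log n = Theta(P) and Omega(n) log P - log n = O(P / log P).
   So log log n = log P + O(1), and Omega(n) = log n / log log n
   + O(log n / (log log n)^2).  For P < 2^24, log n is bounded and the claim is
   immediate. *)

From Stdlib Require Import Reals Lra Lia.
From HB Require Import structures.
From mathcomp Require Import all_boot zify.

Lemma big_primes_iota {R : Type} {idx : R} {op : Monoid.com_law idx} {n N F} :
  (forall p, p \in primes n -> p < N) -> (forall p, logn p n = 0 -> F p = idx) ->
  \big[op/idx]_(p <- primes n) F p = \big[op/idx]_(0 <= p < N | prime p) F p.
Proof.
move=> ltN F0.
have -> : \big[op/idx]_(p <- primes n) F p =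
          \big[op/idx]_(0 <= p < N | p \in primes n) F p.
  rewrite -[RHS]big_filter; apply/perm_big/uniq_perm.
  - exact: primes_uniq.
  - exact/filter_uniq/iota_uniq.
  - by move=> p; rewrite mem_filter mem_iota; case: (boolP (p \in primes n)) => // /ltN; lia.
rewrite big_mkcond [RHS]big_mkcond; apply: eq_bigr => p _.
case: (boolP (p \in primes n)) => [|np]; first by rewrite mem_primes => /and3P[->].
by rewrite F0 ?if_same //; apply/eqP; rewrite eqn0Ngt logn_gt0.
Qed.

Lemma prod_primes_iota {n N} :
  0 < n -> (forall p, p \in primes n -> p < N) ->
  n = \prod_(0 <= p < N | prime p) p ^ logn p n.
Proof.
move=> n_gt0 ltN; rewrite -(big_primes_iota (n := n)) => [|//|p ->//].
by rewrite {1}(prod_prime_decomp n_gt0) prime_decompE big_map.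
Qed.

Lemma prod_const_expn (I : Type) (r : seq I) (P : pred I) (c : nat) :
  \prod_(i <- r | P i) c = c ^ (\sum_(i <- r | P i) 1).
Proof. by rewrite (big_morph (expn c) (expnD c) (expn0 c)). Qed.

(** * Chebyshev bounds over the integers *)

Definition prime_pi (N : nat) : nat := \sum_(0 <= p < N | prime p) 1.

Definition primorial (N : nat) : nat := \prod_(0 <= p < N | prime p) p.

Lemma prime_pi_le N : prime_pi N <= N.
Proof.
rewrite /prime_pi big_mkcond (@leq_trans (\sum_(0 <= p < N) 1)) //.
  by apply: leq_sum => p _; case: ifP.
by rewrite sum_nat_const_nat subn0 muln1.
Qed.

Lemma prime_pi_mono M N : M <= N -> prime_pi M <= prime_pi N.
Proof. by move=> leMN; rewrite /prime_pi (big_cat_nat _ leMN) //= leq_addr. Qed.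

Lemma sum_expn_le_trunc_log p N :
  1 < p -> \sum_(1 <= k < N.+1) (p ^ k <= N) <= trunc_log p N.
Proof.
move=> p_gt1; set T := trunc_log p N.
have leTN : T <= N.
  case: (posnP N) => [N0|N_gt0]; first by rewrite /T N0 trunc_log0.
  exact: leq_trans (ltnW (ltn_expl T p_gt1)) (trunc_logP p_gt1 N_gt0).
rewrite (big_cat_nat _ (n := T.+1)) //=.
have -> : \sum_(T.+1 <= k < N.+1) (p ^ k <= N) = 0.
  rewrite big_nat_cond big1 // => k /andP[/andP[ltTk _] _].
  suff /negbTE -> : ~~ (p ^ k <= N) by [].
  by rewrite -ltnNge (leq_trans (trunc_log_ltn N p_gt1)) // leq_pexp2l // ltnW.
rewrite addn0 (@leq_trans (\sum_(1 <= k < T.+1) 1)) //.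
  by apply: leq_sum => k _; exact: leq_b1.
by rewrite sum_nat_const_nat subn1 muln1.
Qed.

Lemma expn2_le_binom_double m : 2 ^ m <= 'C(m + m, m).
Proof.
elim: m => [|m IHm] //.
rewrite addSn addnS !binS expnS.
have := leq_bin2l m (leqnSn (m + m)); lia.
Qed.

Lemma logn_binom_double_le p m :
  prime p -> logn p 'C(m + m, m) <= trunc_log p (m + m).
Proof.
move=> p_pr; have p_gt1 := prime_gt1 p_pr.
have fact_eq : 'C(m + m, m) * (m`! * m`!) = (m + m)`!.
  by have := bin_fact (leq_addr m m); rewrite addnK.
have legendre : logn p 'C(m + m, m) + (logn p m`! + logn p m`!) = logn p (m + m)`!.
  by rewrite -fact_eq !lognM ?muln_gt0 ?fact_gt0 ?bin_gt0 ?leq_addr.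
have logn_fact_m : logn p m`! = \sum_(1 <= k < (m + m).+1) m %/ p ^ k.
  rewrite logn_fact // [RHS](big_cat_nat _ (n := m.+1)) //= ?ltnS ?leq_addr //.
  rewrite [X in _ = _ + X]big_nat_cond [X in _ = _ + X]big1 ?addn0 //.
  move=> k /andP[/andP[ltmk _] _].
  by rewrite divn_small // (leq_trans ltmk) // ltnW // ltn_expl.
have div_double k : (m + m) %/ p ^ k <= m %/ p ^ k + m %/ p ^ k + (p ^ k <= m + m).
  rewrite divnD ?expn_gt0 ?prime_gt0 // leq_add2l.
  by have := leq_mod m (p ^ k); do 2 case: leqP => //; lia.
have : \sum_(1 <= k < (m + m).+1) (m + m) %/ p ^ k <=
       \sum_(1 <= k < (m + m).+1) (m %/ p ^ k + m %/ p ^ k + (p ^ k <= m + m)).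
  by apply: leq_sum => k _; exact: div_double.
rewrite !big_split /= -logn_fact_m -logn_fact // -legendre.
have := @sum_expn_le_trunc_log p (m + m) p_gt1; lia.
Qed.

Lemma binom_double_le_expn_pi {m} :
  0 < m -> 'C(m + m, m) <= (m + m) ^ prime_pi (m + m).+1.
Proof.
move=> m_gt0; have C_gt0 : 0 < 'C(m + m, m) by rewrite bin_gt0 leq_addr.
have pfactor_le p : prime p -> p ^ logn p 'C(m + m, m) <= m + m.
  move=> p_pr; apply: leq_trans (trunc_logP (prime_gt1 p_pr) _); last lia.
  by apply: leq_pexp2l; [exact: prime_gt0 | exact: logn_binom_double_le].
rewrite {1}(@prod_primes_iota 'C(m + m, m) (m + m).+1 C_gt0) => [|p p_in].
  rewrite /prime_pi -prod_const_expn; apply: leq_prod => p p_pr; exact: pfactor_le.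
have p_pr : prime p by move: p_in; rewrite mem_primes => /andP[].
rewrite ltnS (leq_trans _ (pfactor_le p p_pr)) // -{1}(expn1 p).
by apply: leq_pexp2l; [exact: prime_gt0 | rewrite logn_gt0].
Qed.

Lemma binom_odd_le m : 'C((m + m).+1, m) <= 4 ^ m.
Proof.
have binom_sum : \sum_(0 <= i < (m + m).+2) 'C((m + m).+1, i) = 2 ^ (m + m).+1.
  rewrite -[2]/(1 + 1) expnDn big_mkord.
  by apply: eq_bigr => i _; rewrite !exp1n !muln1.
have binom_sym : 'C((m + m).+1, m.+1) = 'C((m + m).+1, m).
  by rewrite -bin_sub ?subSS ?addnK // ltnS leq_addr.
rewrite (big_cat_nat _ (n := m)) //= ?(@big_ltn _ _ _ m) ?(@big_ltn _ _ _ m.+1) in binom_sum;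
  try lia.
have -> : 4 ^ m = 2 ^ (m + m) by rewrite expnD -expnMn.
rewrite expnS binom_sym in binom_sum; lia.
Qed.

Lemma logn_fact_small p k : prime p -> k < p -> logn p k`! = 0.
Proof.
move=> p_pr ltkp; rewrite logn_fact // big_nat_cond big1 // => i /andP[/andP[i_gt0 _] _].
rewrite divn_small // (leq_trans ltkp) // -{1}(expn1 p).
exact: leq_pexp2l (prime_gt0 p_pr) i_gt0.
Qed.

Lemma prod_mid_primes_le m :
  \prod_(m.+2 <= p < (m + m).+2 | prime p) p <= 'C((m + m).+1, m).
Proof.
set C := 'C((m + m).+1, m); set N := C + (m + m).+2.
have C_gt0 : 0 < C by rewrite bin_gt0 -addnS leq_addr.
have fact_eq : C * (m`! * m.+1`!) = (m + m).+1`!.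
  by have := bin_fact (leqW (leq_addr m m)); rewrite subSn ?leq_addr // addnK.
have logn_mid p : prime p -> m.+2 <= p < (m + m).+2 -> 0 < logn p C.
  move=> p_pr /andP[lo hi].
  have -> : logn p C = logn p (m + m).+1`!.
    rewrite -fact_eq (lognM _ C_gt0) ?muln_gt0 ?fact_gt0 //.
    by rewrite (lognM _ (fact_gt0 m) (fact_gt0 m.+1)) !logn_fact_small ?addn0 //; lia.
  by rewrite logn_gt0 mem_primes p_pr fact_gt0 dvdn_fact // prime_gt0.
rewrite [X in _ <= X](@prod_primes_iota C N C_gt0); last first.
  by move=> p; rewrite mem_primes => /and3P[_ _ /(dvdn_leq C_gt0)]; lia.
have part_gt0 a b : 0 < \prod_(a <= p < b | prime p) p ^ logn p C.
  by apply: prodn_cond_gt0 => p p_pr; rewrite expn_gt0 prime_gt0.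
have le_mid : m.+2 <= (m + m).+2 by rewrite !ltnS leq_addr.
have le_N : (m + m).+2 <= N by rewrite leq_addl.
rewrite (big_cat_nat (leq0n m.+2) (leq_trans le_mid le_N)).
rewrite (big_cat_nat le_mid le_N) /= mulnA.
apply: leq_trans (leq_pmulr _ (part_gt0 _ _)); apply: leq_trans (leq_pmull _ (part_gt0 _ _)).
rewrite big_nat_cond [X in _ <= X]big_nat_cond; apply: leq_prod => p /andP[p_mid p_pr].
by rewrite -{1}(expn1 p); apply: leq_pexp2l; [exact: prime_gt0 | exact: logn_mid].
Qed.

Lemma primorial_le N : primorial N <= 4 ^ N.
Proof.
elim/ltn_ind: N => -[|k] IH; first by rewrite /primorial big_geq.
have primorialS : primorial k.+1 = primorial k * (if prime k then k else 1).
  by rewrite /primorial big_mkcond big_nat_recr //= -big_mkcond.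
case: (boolP (prime k)) => [k_pr | k_npr]; last first.
  by rewrite primorialS ifN // muln1 expnS (leq_trans (IH k _)) ?leq_pmull.
case: (even_prime k_pr) => [k2 | k_odd].
  by rewrite primorialS k2 expnS mulnC; apply: leq_mul => //; apply: IH; rewrite k2.
set m := k./2; have k_eq : k = (m + m).+1.
  by rewrite addnn -[in LHS](odd_double_half k) k_odd.
have le_mid : m.+2 <= k.+1 by rewrite k_eq !ltnS leq_addr.
rewrite /primorial (big_cat_nat (leq0n _) le_mid) -/(primorial m.+2) /=.
have -> : 4 ^ k.+1 = 4 ^ m.+2 * 4 ^ m by rewrite -expnD k_eq !addSn.
have m_gt0 : 0 < m by rewrite lt0n; apply: contraTneq k_pr => m0; rewrite k_eq m0.
rewrite leq_mul ?IH //; first by rewrite k_eq; lia.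
by rewrite k_eq; exact: leq_trans (prod_mid_primes_le m) (binom_odd_le m).
Qed.

(** * Chebyshev bounds for logarithmic sums *)

Open Scope R_scope.

Lemma Rplus_associative : associative Rplus.
Proof. by move=> x y z; rewrite Rplus_assoc. Qed.

HB.instance Definition _ :=
  Monoid.isComLaw.Build R 0 Rplus Rplus_associative Rplus_comm Rplus_0_l.
HB.instance Definition _ := Monoid.isMulLaw.Build R 0 Rmult Rmult_0_l Rmult_0_r.
HB.instance Definition _ :=
  Monoid.isAddLaw.Build R Rmult Rplus Rmult_plus_distr_r Rmult_plus_distr_l.

Section RealSums.

Variables (I : Type) (r : seq I) (P : pred I).

Lemma Rle_sum (F G : I -> R) :
  (forall i, P i -> F i <= G i) ->
  \big[Rplus/0]_(i <- r | P i) F i <= \big[Rplus/0]_(i <- r | P i) G i.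
Proof. by move=> leFG; apply: big_ind2 => // *; lra. Qed.

Lemma Rsum_ge0 (F : I -> R) :
  (forall i, P i -> 0 <= F i) -> 0 <= \big[Rplus/0]_(i <- r | P i) F i.
Proof. by move=> F_ge0; apply: big_ind => // *; lra. Qed.

Lemma INR_sum (F : I -> nat) :
  INR (\sum_(i <- r | P i) F i) = \big[Rplus/0]_(i <- r | P i) INR (F i).
Proof. exact: (big_morph INR plus_INR). Qed.

Lemma Rsum_const (c : R) :
  \big[Rplus/0]_(i <- r | P i) c = INR (\sum_(i <- r | P i) 1) * c.
Proof. by rewrite INR_sum big_distrl; apply: eq_bigr => i _ /=; rewrite Rmult_1_l. Qed.

Lemma Rsum_sub (F G : I -> R) :
  \big[Rplus/0]_(i <- r | P i) (F i - G i) =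
  \big[Rplus/0]_(i <- r | P i) F i - \big[Rplus/0]_(i <- r | P i) G i.
Proof.
by rewrite big_split /Rminus (big_morph Ropp Ropp_plus_distr Ropp_0).
Qed.

Lemma ln_prod (F : I -> nat) :
  (forall i, P i -> (0 < F i)%N) ->
  ln (INR (\prod_(i <- r | P i) F i)) = \big[Rplus/0]_(i <- r | P i) ln (INR (F i)).
Proof.
move=> F_gt0; suff [] : (0 < \prod_(i <- r | P i) F i)%N /\
  ln (INR (\prod_(i <- r | P i) F i)) = \big[Rplus/0]_(i <- r | P i) ln (INR (F i)) by [].
apply: (big_ind2 (fun a b => (0 < a)%N /\ ln (INR a) = b)) => [|a1 b1 a2 b2|i /F_gt0 //].
  by rewrite ln_1.
move=> [a1_gt0 <-] [a2_gt0 <-]; rewrite muln_gt0 a1_gt0 a2_gt0 mult_INR ln_mult //.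
  exact/lt_0_INR/ltP.
exact/lt_0_INR/ltP.
Qed.

End RealSums.

Lemma Rsum_nat_suffix_le {P : pred nat} {F : nat -> R} {m n : nat} :
  (m <= n)%N -> (forall i, (i < m)%N -> P i -> 0 <= F i) ->
  \big[Rplus/0]_(m <= i < n | P i) F i <= \big[Rplus/0]_(0 <= i < n | P i) F i.
Proof.
move=> le_mn F_ge0; rewrite [X in _ <= X](big_cat_nat (leq0n m) le_mn) /=.
suff : 0 <= \big[Rplus/0]_(0 <= i < m | P i) F i by lra.
by rewrite big_nat_cond; apply: Rsum_ge0 => i /andP[/andP[_ lt_im] Pi]; exact: F_ge0.
Qed.

Lemma INR_leq {m n} : (m <= n)%N -> INR m <= INR n.
Proof. by move/leP; exact: le_INR. Qed.

Lemma INR_ltn {m n} : (m < n)%N -> INR m < INR n.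
Proof. by move/ltP; exact: lt_INR. Qed.

Lemma INR_expn a k : INR (a ^ k) = INR a ^ k.
Proof. by elim: k => [|k IHk] //; rewrite expnS mult_INR IHk. Qed.

Lemma INR_pow2 k : INR (2 ^ k) = 2 ^ k.
Proof. by rewrite INR_expn INR_IZR_INZ. Qed.

Lemma ln_le x y : 0 < x -> x <= y -> ln x <= ln y.
Proof.
move=> x_gt0 /Rle_lt_or_eq_dec[lt_xy | <-]; last exact: Rle_refl.
exact/Rlt_le/ln_increasing.
Qed.

Lemma ln_ge0 x : 1 <= x -> 0 <= ln x.
Proof. by move=> x_ge1; rewrite -ln_1; apply: ln_le => //; lra. Qed.

Lemma ln_le_sub1 x : 0 < x -> ln x <= x - 1.
Proof. by move=> x_gt0; have := exp_ineq1_le (ln x); rewrite exp_ln //; lra. Qed.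

(* Stdlib's [ln] is [0] on nonpositive arguments, in particular at [INR 0]. *)
Lemma ln_INR_small n : (n <= 1)%N -> ln (INR n) = 0.
Proof.
case: n => [_|[|//] _]; last by rewrite ln_1.
by rewrite /= /ln; case: Rlt_dec => // lt00; case: (Rlt_irrefl _ lt00).
Qed.

Lemma ln_INR_ge0 n : 0 <= ln (INR n).
Proof.
case: (leqP n 1) => [/ln_INR_small -> | n_gt1]; first exact: Rle_refl.
by apply: ln_ge0; apply: (@INR_leq 1); exact: ltnW.
Qed.

Lemma ln_INR_le {m n} : (m <= n)%N -> ln (INR m) <= ln (INR n).
Proof.
case: (posnP m) => [-> _ | m_gt0 le_mn]; first by rewrite ln_INR_small //; exact: ln_INR_ge0.
by apply: ln_le; [exact: (@INR_ltn 0) | exact: INR_leq].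
Qed.

Lemma ln_le_pow2_mul x y k : 0 < x -> x <= 2 ^ k * y -> ln x <= INR k * ln 2 + ln y.
Proof.
move=> x_gt0 le_x; have pow_gt0 : 0 < 2 ^ k by apply: pow_lt; lra.
have y_gt0 : 0 < y by nra.
by rewrite -(ln_pow 2 Rlt_0_2) -ln_mult //; exact: ln_le.
Qed.

Lemma ln2_le1 : ln 2 <= 1.
Proof. by have := ln_le_sub1 2; lra. Qed.

Lemma ln2_le_ln_prime {p} : prime p -> ln 2 <= ln (INR p).
Proof. by move=> p_pr; have := ln_INR_le (prime_gt1 p_pr). Qed.

Lemma exp_1_lt_3 : exp 1 < 3.
Proof.
(* [exp (1/6) <= 6/5] follows from [1 - 1/6 <= exp (-1/6)], and [(6/5)^6 < 3]. *)
have exp_sixth : exp (1 / 6) <= 6 / 5.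
  have := exp_ineq1_le (- (1 / 6)); rewrite exp_Ropp => h.
  have := exp_pos (1 / 6); move: (exp (1 / 6)) h => u h u_gt0.
  have : 5 / 6 * u <= / u * u by apply: Rmult_le_compat_r; lra.
  by rewrite Rinv_l; lra.
have exp_mul k x : exp (INR k * x) = exp x ^ k.
  elim: k => [|k IHk]; first by rewrite Rmult_0_l exp_0.
  by rewrite S_INR Rmult_plus_distr_r Rmult_1_l exp_plus IHk Rmult_comm.
have -> : 1 = INR 6 * (1 / 6) by rewrite /=; field.
rewrite exp_mul; have := pow_incr _ _ 6 (conj (Rlt_le _ _ (exp_pos (1 / 6))) exp_sixth).
lra.
Qed.

Lemma ln3_gt1 : 1 < ln 3.
Proof. by rewrite -(ln_exp 1); apply: ln_increasing; [exact: exp_pos | exact: exp_1_lt_3]. Qed.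

Lemma ln_le_double_ln {N p} : (N < p * p)%N -> ln (INR N) <= 2 * ln (INR p).
Proof.
move=> lt_N_pp; have p_gt0 : 0 < INR p by apply: (@INR_ltn 0); case: p lt_N_pp => [|[]].
apply: Rle_trans (ln_INR_le (ltnW lt_N_pp)) _.
by rewrite mult_INR ln_mult //; lra.
Qed.

Lemma eighth_root_scale {N} : (2 <= N)%N -> exists t y,
  [/\ (t <= N)%N, (N < t * t)%N, 1 <= y, y ^ 8 = INR N & INR t <= 2 * y ^ 4].
Proof.
move=> N_ge2; have N_ge1 : 1 <= INR N by apply: (@INR_leq 1); exact: ltnW.
have [sqrt_lo sqrt_hi] := Nat.sqrt_spec N (Nat.le_0_l N).
set s := Nat.sqrt N in sqrt_lo sqrt_hi.
clearbody s; have s_ge1 : (1 <= s)%N by case: s sqrt_lo sqrt_hi => [|//] /=; lia.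
have sqrt_ge1 x : 1 <= x -> 1 <= sqrt x by move=> x_ge1; rewrite -sqrt_1; apply: sqrt_le_1_alt.
set y := sqrt (sqrt (sqrt (INR N))).
have y_ge1 : 1 <= y by do 3!apply: (sqrt_ge1).
have y4 : y ^ 4 = sqrt (INR N).
  have y2 : y * y = sqrt (sqrt (INR N)) by rewrite /y sqrt_sqrt //; apply: sqrt_pos.
  rewrite -[RHS]sqrt_sqrt; last exact: sqrt_pos.
  by rewrite -y2; ring.
have s_le : INR s <= y ^ 4.
  rewrite y4 -(sqrt_square (INR s) (pos_INR s)); apply: sqrt_le_1_alt.
  by rewrite -mult_INR; apply: le_INR.
exists s.+1, y; split => //; try nia.
- by rewrite -(sqrt_sqrt (INR N)) -?y4; [ring | lra].
- by rewrite S_INR; have := pow_R1_Rle y 4 y_ge1; lra.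
Qed.

Lemma ln_root_le y : 1 <= y -> ln (y ^ 8) <= 8 * y.
Proof. by move=> y_ge1; rewrite ln_pow /=; have := ln_le_sub1 y; lra. Qed.

Definition theta (N : nat) : R := \big[Rplus/0]_(0 <= p < N | prime p) ln (INR p).

Lemma theta_le N : theta N <= 2 * INR N.
Proof.
have prim_gt0 : (0 < primorial N)%N by apply: prodn_cond_gt0 => p /prime_gt0.
rewrite /theta -ln_prod => [|p /prime_gt0 //]; rewrite -/(primorial N).
apply: Rle_trans (ln_le _ _ (@INR_ltn 0 _ prim_gt0) (INR_leq (primorial_le N))) _.
have ln4_le : ln (INR 4) <= 2.
  by rewrite INR_IZR_INZ (_ : 4 = 2 * 2) ?ln_mult; have := ln2_le1; lra.
rewrite INR_expn ln_pow; last by apply: (@INR_ltn 0).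
by have := pos_INR N; nra.
Qed.

Lemma prime_pi_ln_le N : INR (prime_pi N) * ln (INR N) <= 20 * INR N.
Proof.
case: (leqP N 1) => [/ln_INR_small -> | N_ge2]; first by have := pos_INR N; lra.
have [t [y [le_tN lt_Ntt y_ge1 yN le_t]]] := eighth_root_scale N_ge2.
have lnN_le : ln (INR N) <= 8 * y by rewrite -yN; exact: ln_root_le.
rewrite /prime_pi -Rsum_const (big_cat_nat (leq0n t) le_tN) /=.
have small : \big[Rplus/0]_(0 <= p < t | prime p) ln (INR N) <= 16 * INR N.
  rewrite Rsum_const -/(prime_pi t).
  have le_pi : INR (prime_pi t) <= 2 * y ^ 4 := Rle_trans _ _ _ (INR_leq (prime_pi_le t)) le_t.
  apply: Rle_trans (Rmult_le_compat _ _ _ _ (pos_INR _) (ln_INR_ge0 N) le_pi lnN_le) _.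
  have := Rle_pow y 5 8 y_ge1 ltac:(lia); rewrite yN /=; lra.
have large : \big[Rplus/0]_(t <= p < N | prime p) ln (INR N) <= 2 * theta N.
  rewrite /theta Rmult_comm big_distrl /=.
  apply: Rle_trans _ (Rsum_nat_suffix_le le_tN _) => [|p _ _]; last first.
    by have := ln_INR_ge0 p; lra.
  rewrite big_nat_cond [X in _ <= X]big_nat_cond.
  apply: Rle_sum => p /andP[/andP[le_tp _] _].
  by have := ln_le_double_ln (leq_trans lt_Ntt (leq_mul le_tp le_tp)); lra.
by have := theta_le N; lra.
Qed.

Lemma prime_pi_ln_ge {N} : (3 <= N)%N -> (INR N - 2) / 4 <= INR (prime_pi N) * ln (INR N).
Proof.
move=> N_ge3; set m := N.-1./2.
have m_gt0 : (0 < m)%N by rewrite /m; lia.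
have le_mN : ((m + m).+1 <= N)%N by rewrite /m; lia.
have N_le : INR N <= 2 * INR m + 2.
  have : (N <= (m + m).+2)%N by rewrite /m; lia.
  by move/INR_leq; rewrite !S_INR plus_INR; lra.
have two_pow : INR m * ln 2 <= INR (prime_pi (m + m).+1) * ln (INR (m + m)).
  have binom := leq_trans (expn2_le_binom_double m) (binom_double_le_expn_pi m_gt0).
  have pow_gt0 : 0 < INR (2 ^ m) by rewrite INR_expn; apply: pow_lt; rewrite /=; lra.
  have INR2 : INR 2 = 2 by rewrite /=; lra.
  have mm_gt0 : 0 < INR (m + m) by apply: (@INR_ltn 0); lia.
  by have := ln_le _ _ pow_gt0 (INR_leq binom); rewrite !INR_expn INR2 !ln_pow //; lra.
have mono : INR (prime_pi (m + m).+1) * ln (INR (m + m)) <= INR (prime_pi N) * ln (INR N).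
  apply: Rmult_le_compat; [exact: pos_INR | exact: ln_INR_ge0 | |].
    exact/INR_leq/prime_pi_mono.
  exact/ln_INR_le/ltnW.
have := ln_lt_2; have := pos_INR m; nra.
Qed.

Definition sum_ln_ratio (N : nat) : R :=
  \big[Rplus/0]_(0 <= p < N | prime p) (ln (INR N) - ln (INR p)).

Lemma sum_ln_ratio_ge0 N : 0 <= sum_ln_ratio N.
Proof.
rewrite /sum_ln_ratio big_nat_cond; apply: Rsum_ge0 => p /andP[/andP[_ lt_pN] _].
by have := ln_INR_le (ltnW lt_pN); lra.
Qed.

Lemma sum_ln_ratio_le_pi N : sum_ln_ratio N <= INR (prime_pi N) * ln (INR N).
Proof.
rewrite /sum_ln_ratio /prime_pi -Rsum_const; apply: Rle_sum => p _.
by have := ln_INR_ge0 p; lra.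
Qed.

Lemma ln_le_ln_half {N} : (1 <= N)%N -> ln (INR N) <= ln 2 + ln (INR N.+1./2).
Proof.
move=> N_gt0; have M_gt0 : 0 < INR N.+1./2 by apply: (@INR_ltn 0); lia.
rewrite -ln_mult //; last lra.
apply: ln_le; first by apply: (@INR_ltn 0).
have : (N <= N.+1./2 + N.+1./2)%N by lia.
by move/INR_leq; rewrite plus_INR; lra.
Qed.

Lemma sum_ln_ratio_halve {N} : (1 <= N)%N ->
  sum_ln_ratio N <= INR (prime_pi N) * ln 2 + sum_ln_ratio N.+1./2.
Proof.
move=> N_gt0; have lnN_le := ln_le_ln_half N_gt0; set M := N.+1./2 in lnN_le *.
have le_MN : (M <= N)%N by rewrite /M; lia.
rewrite /sum_ln_ratio /prime_pi -Rsum_const (big_cat_nat (leq0n M) le_MN) /=.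
rewrite [X in _ <= X + _](big_cat_nat (leq0n M) le_MN) /=.
have low : \big[Rplus/0]_(0 <= p < M | prime p) (ln (INR N) - ln (INR p)) <=
    \big[Rplus/0]_(0 <= p < M | prime p) ln 2 +
    \big[Rplus/0]_(0 <= p < M | prime p) (ln (INR M) - ln (INR p)).
  by rewrite -big_split; apply: Rle_sum => p _ /=; lra.
have high : \big[Rplus/0]_(M <= p < N | prime p) (ln (INR N) - ln (INR p)) <=
    \big[Rplus/0]_(M <= p < N | prime p) ln 2.
  rewrite big_nat_cond [X in _ <= X]big_nat_cond.
  apply: Rle_sum => p /andP[/andP[le_Mp _] _].
  by have := ln_INR_le le_Mp; lra.
lra.
Qed.

Lemma sum_ln_ratio_ln_le N : sum_ln_ratio N * ln (INR N) <= 200 * INR N.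
Proof.
elim/ltn_ind: N => N IH.
case: (leqP N 1) => [/ln_INR_small -> | N_ge2]; first by have := pos_INR N; lra.
have N_gt0 : (1 <= N)%N by exact: ltnW.
set M := N.+1./2.
have IHM := IH M ltac:(rewrite /M; lia).
have M_le : 2 * INR M <= INR N + 1.
  have : (M + M <= N.+1)%N by rewrite /M; lia.
  by move/INR_leq; rewrite plus_INR S_INR; lra.
have DM_le : sum_ln_ratio M <= 20 * INR M.
  exact: Rle_trans _ _ _ (sum_ln_ratio_le_pi M) (prime_pi_ln_le M).
have lnN_le := ln_le_ln_half N_gt0; rewrite -/M in lnN_le.
have lnN_ge0 := ln_INR_ge0 N; have ln2_ge : / 2 < ln 2 := ln_lt_2.
have DM_ge0 := sum_ln_ratio_ge0 M.
have halve := Rmult_le_compat_r _ _ _ lnN_ge0 (sum_ln_ratio_halve N_gt0); rewrite -/M in halve.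
have DM_lnN := Rmult_le_compat_l _ _ _ DM_ge0 lnN_le.
have pi_ln2 : INR (prime_pi N) * ln 2 * ln (INR N) <= 20 * INR N * ln 2.
  rewrite Rmult_assoc (Rmult_comm (ln 2)) -Rmult_assoc.
  by apply: Rmult_le_compat_r; [lra | exact: prime_pi_ln_le].
have N_ge2' : 2 <= INR N by have := @INR_leq 2 _ N_ge2; rewrite /=; lra.
have := Rmult_le_compat_l _ _ _ (pos_INR N) ln2_le1.
have := Rmult_le_compat_l _ _ _ DM_ge0 ln2_le1.
lra.
Qed.

Lemma root8_ge8 y : 0 <= y -> 2 ^ 24 <= y ^ 8 -> 8 <= y.
Proof.
move=> y_ge0 y8_ge; case: (Rle_lt_dec 8 y) => // lt_y8.
have le7 := pow_incr y 8 7 (conj y_ge0 (Rlt_le _ _ lt_y8)).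
have : y * y ^ 7 < 8 * 8 ^ 7.
  apply: Rle_lt_trans (Rmult_le_compat_l _ _ _ y_ge0 le7) _.
  by apply: Rmult_lt_compat_r => //; apply: pow_lt; lra.
have -> : y * y ^ 7 = y ^ 8 by ring.
have -> : 8 * 8 ^ 7 = 2 ^ 24 by ring.
lra.
Qed.

(* [2 ^ 24 = 8 ^ 8] makes the eighth root at least [8], which is what absorbs the
   primes below [sqrt N] in the estimates of the next section. *)
Lemma eighth_root_scale_large {N} : (2 ^ 24 <= N)%N -> exists t y,
  [/\ (2 < t <= N)%N, (N < t * t)%N, 8 <= y, y ^ 8 = INR N &
       ln (INR N) <= 8 * y /\ INR t <= 2 * y ^ 4].
Proof.
move=> N_large; have N_ge9 : (9 <= N)%N by apply: leq_trans N_large.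
have [t [y [le_tN lt_Ntt y_ge1 yN le_t]]] := eighth_root_scale (leq_trans (isT : 2 <= 9)%N N_ge9).
exists t, y; split => //.
- by apply/andP; split; nia.
- apply: root8_ge8; first lra.
  by have := INR_leq N_large; rewrite INR_pow2 yN.
- by rewrite -yN; split => //; exact: ln_root_le.
Qed.

(** * Exponent profiles *)

Lemma deviation_bound_small L Om K :
  1 < L -> L <= K -> 0 <= Om <= 2 * L ->
  Rabs (Om - L / ln L) <= (2 * K ^ 2 + K) * (L / ln L ^ 2).
Proof.
move=> L_gt1 L_le [Om_ge0 Om_le]; set lam := ln L.
have lam_gt0 : 0 < lam by rewrite /lam -ln_1; apply: ln_increasing; lra.
have lam_le : lam <= K by have := ln_le_sub1 L; rewrite -/lam; lra.
set u := L / lam ^ 2.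
have u_ge0 : 0 <= u by apply/Rlt_le/Rdiv_lt_0_compat; [lra | apply: pow_lt].
have eL : L = u * lam ^ 2 by rewrite /u; field; lra.
have -> : L / lam = u * lam by rewrite eL; field; lra.
have lamK2 : u * lam ^ 2 <= u * K ^ 2 by apply/Rmult_le_compat_l/pow_incr; lra.
have lamK : u * lam <= u * K by apply: Rmult_le_compat_l.
apply: Rabs_le; split; have := Rmult_le_pos _ _ u_ge0 (Rlt_le _ _ lam_gt0); nra.
Qed.

Lemma deviation_bound_large L Om lP M :
  12 <= lP -> lP - 6 <= ln L <= lP + 6 -> M / 16 <= L -> L <= Om * lP ->
  (Om * lP - L) * lP <= 5264 * M ->
  Rabs (Om - L / ln L) <= 340000 * (L / ln L ^ 2).
Proof.
move=> lP_ge [lam_lo lam_hi] M_le L_le X_le; set lam := ln L in lam_lo lam_hi *.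
have lam_gt0 : 0 < lam by lra.
have L_ge0 : 0 <= L by nra.
set w := Om - L / lam.
(* [w lP lam] splits into the error of [Om lP ~ L] and that of [lP ~ lam]. *)
have ew : w * (lP * lam) = (Om * lP - L) * lam + L * (lam - lP) by rewrite /w; field; lra.
have err1 : (Om * lP - L) * lam <= 2 * 5264 * 16 * L by nra.
have err2 : Rabs (L * (lam - lP)) <= 6 * L.
  rewrite Rabs_mult (Rabs_pos_eq L) // Rmult_comm.
  by apply: Rmult_le_compat_r => //; apply: Rabs_le; lra.
have w_lP_lam : Rabs w * (lP * lam) <= 168454 * L.
  rewrite -[lP * lam]Rabs_pos_eq; last nra.
  rewrite -Rabs_mult ew; apply: Rle_trans (Rabs_triang _ _) _.
  by rewrite [Rabs (_ * lam)]Rabs_pos_eq; nra.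
apply: (Rmult_le_reg_r (lam ^ 2)); first exact: pow_lt.
have -> : 340000 * (L / lam ^ 2) * lam ^ 2 = 340000 * L by field; lra.
have := Rabs_pos w; rewrite /=; nra.
Qed.

Section ExponentProfile.

(* [a p] stands for the exponent of [p] in a reduced number whose least odd
   non-divisor is [P]. *)
Variables (P : nat) (a : nat -> nat).

Hypothesis a_ln_le :
  forall p, prime p -> (p < P)%N -> INR (a p) * ln (INR p) <= 3 + 2 * ln (INR P).
Hypothesis a_odd_ge1 : forall p, prime p -> (2 < p)%N -> (p < P)%N -> (1 <= a p)%N.
Hypothesis a_odd_le2 :
  forall p, prime p -> (2 < p)%N -> (p < P)%N -> (P < p * p)%N -> (a p <= 2)%N.

Local Notation lnP := (ln (INR P)).
Local Notation lnsum := (\big[Rplus/0]_(0 <= p < P | prime p) (INR (a p) * ln (INR p))).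
Local Notation asum := (\big[Rplus/0]_(0 <= p < P | prime p) INR (a p)).

Lemma exponent_le {p} : prime p -> (p < P)%N -> INR (a p) <= 6 + 4 * lnP.
Proof.
move=> p_pr lt_pP; have := a_ln_le p p_pr lt_pP; have := ln2_le_ln_prime p_pr.
have := ln_lt_2; have := pos_INR (a p); nra.
Qed.

Lemma lnsum_le : lnsum <= 43 * INR P.
Proof.
apply: Rle_trans (_ : \big[Rplus/0]_(0 <= p < P | prime p) (3 + 2 * lnP) <= _).
  rewrite big_nat_cond [X in _ <= X]big_nat_cond.
  by apply: Rle_sum => p /andP[/andP[_ lt_pP] p_pr]; exact: a_ln_le.
rewrite Rsum_const -/(prime_pi P).
have := prime_pi_ln_le P; have := INR_leq (prime_pi_le P); lra.
Qed.

Lemma asum_ln2_le : asum * ln 2 <= lnsum.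
Proof.
rewrite big_distrl; apply: Rle_sum => p p_pr /=.
by apply: Rmult_le_compat_l; [exact: pos_INR | exact: ln2_le_ln_prime].
Qed.

Lemma lnsum_le_asum_lnP : lnsum <= asum * lnP.
Proof.
rewrite big_distrl big_nat_cond [X in _ <= X]big_nat_cond.
apply: Rle_sum => p /andP[/andP[_ lt_pP] _] /=.
exact/Rmult_le_compat_l/ln_INR_le/ltnW/lt_pP/pos_INR.
Qed.

Lemma lnsum_ge : (2 ^ 24 <= P)%N -> INR P / 16 <= lnsum.
Proof.
move=> P_large.
have [t [y [/andP[t_gt2 le_tP] lt_Ptt y_ge8 yP [lnP_le le_t]]]] := eighth_root_scale_large P_large.
have lnP_ge0 := ln_INR_ge0 P.
rewrite (big_cat_nat (leq0n t) le_tP) /=.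
have head_ge0 : 0 <= \big[Rplus/0]_(0 <= p < t | prime p) (INR (a p) * ln (INR p)).
  by apply: Rsum_ge0 => p _; apply: Rmult_le_pos; [exact: pos_INR | exact: ln_INR_ge0].
have tail_ge : \big[Rplus/0]_(t <= p < P | prime p) (lnP / 2) <=
               \big[Rplus/0]_(t <= p < P | prime p) (INR (a p) * ln (INR p)).
  rewrite big_nat_cond [X in _ <= X]big_nat_cond.
  apply: Rle_sum => p /andP[/andP[le_tp lt_pP] p_pr].
  have a_ge1 := INR_leq (a_odd_ge1 p p_pr (leq_trans t_gt2 le_tp) lt_pP).
  have := ln_le_double_ln (leq_trans lt_Ptt (leq_mul le_tp le_tp)).
  have := ln_INR_ge0 p; rewrite /= in a_ge1; nra.
have count_tail : INR (\sum_(t <= p < P | prime p) 1) = INR (prime_pi P) - INR (prime_pi t).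
  by rewrite /prime_pi [in RHS](big_cat_nat (leq0n t) le_tP) plus_INR /=; ring.
rewrite Rsum_const count_tail Rmult_minus_distr_r in tail_ge.
have pi_t : INR (prime_pi t) * lnP <= 16 * y ^ 5.
  have le_pi : INR (prime_pi t) <= 2 * y ^ 4 := Rle_trans _ _ _ (INR_leq (prime_pi_le t)) le_t.
  apply: Rle_trans (Rmult_le_compat _ _ _ _ (pos_INR _) lnP_ge0 le_pi lnP_le) _.
  by rewrite /=; lra.
have pi_P := prime_pi_ln_ge (leq_trans (isT : 3 <= 2 ^ 24)%N P_large).
have y5_ge1 : 1 <= y ^ 5 by apply: pow_R1_Rle; lra.
have y85 : 512 * y ^ 5 <= y ^ 8.
  rewrite (_ : y ^ 8 = y ^ 3 * y ^ 5); last by ring.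
  apply: Rmult_le_compat_r; first lra.
  by rewrite (_ : 512 = 8 ^ 3); [apply: pow_incr; lra | ring].
lra.
Qed.

Lemma asum_lnP_sub_le : (2 ^ 24 <= P)%N -> (asum * lnP - lnsum) * lnP <= 5264 * INR P.
Proof.
move=> P_large.
have [t [y [/andP[t_gt2 le_tP] lt_Ptt y_ge8 yP [lnP_le le_t]]]] := eighth_root_scale_large P_large.
have lnP_ge0 := ln_INR_ge0 P.
have -> : asum * lnP - lnsum =
          \big[Rplus/0]_(0 <= p < P | prime p) (INR (a p) * (lnP - ln (INR p))).
  by rewrite big_distrl -Rsum_sub; apply: eq_bigr => p _ /=; ring.
rewrite (big_cat_nat (leq0n t) le_tP) /=.
have head : \big[Rplus/0]_(0 <= p < t | prime p) (INR (a p) * (lnP - ln (INR p))) <=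
            INR t * ((6 + 4 * lnP) * lnP).
  apply: Rle_trans (_ : \big[Rplus/0]_(0 <= p < t | prime p) ((6 + 4 * lnP) * lnP) <= _).
    rewrite big_nat_cond [X in _ <= X]big_nat_cond.
    apply: Rle_sum => p /andP[/andP[_ lt_pt] p_pr].
    have := exponent_le p_pr (leq_trans lt_pt le_tP).
    have := ln_INR_ge0 p; have := pos_INR (a p); nra.
  rewrite Rsum_const; apply: Rmult_le_compat_r; first nra.
  exact/INR_leq/prime_pi_le.
have tail : \big[Rplus/0]_(t <= p < P | prime p) (INR (a p) * (lnP - ln (INR p))) <=
            2 * sum_ln_ratio P.
  rewrite /sum_ln_ratio big_distrr /=.
  apply: Rle_trans _ (Rsum_nat_suffix_le le_tP _) => [|p lt_pt _]; last first.
    by have := ln_INR_le (ltnW (leq_trans lt_pt le_tP)); lra.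
  rewrite big_nat_cond [X in _ <= X]big_nat_cond.
  apply: Rle_sum => p /andP[/andP[le_tp lt_pP] p_pr].
  have a_le2 := INR_leq (a_odd_le2 p p_pr (leq_trans t_gt2 le_tp) lt_pP
                          (leq_trans lt_Ptt (leq_mul le_tp le_tp))).
  have := ln_INR_le (ltnW lt_pP); rewrite /= in a_le2; have := pos_INR (a p); nra.
have D_le := sum_ln_ratio_ln_le P.
have := Rmult_le_compat_r _ _ _ lnP_ge0 head.
have := Rmult_le_compat_r _ _ _ lnP_ge0 tail.
have poly : INR t * ((6 + 4 * lnP) * lnP) * lnP <= 2 * y ^ 4 * (38 * y * (64 * y ^ 2)).
  have sq : lnP * lnP <= 64 * y ^ 2 by rewrite /=; nra.
  rewrite Rmult_assoc (Rmult_assoc (6 + _)).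
  apply: Rmult_le_compat; [exact: pos_INR | nra | done |].
  by apply: Rmult_le_compat; nra.
have := Rle_pow y 7 8 ltac:(lra) ltac:(lia).
have : 2 * y ^ 4 * (38 * y * (64 * y ^ 2)) = 4864 * y ^ 7 by ring.
lra.
Qed.

Lemma omega_deviation_small :
  (P < 2 ^ 24)%N -> 1 < lnsum ->
  Rabs (asum - lnsum / ln lnsum) <=
    (2 * (43 * 2 ^ 24) ^ 2 + 43 * 2 ^ 24) * (lnsum / ln lnsum ^ 2).
Proof.
move=> P_small lnsum_gt1; apply: deviation_bound_small => //.
  by have := INR_ltn P_small; rewrite INR_pow2; have := lnsum_le; lra.
split; first by apply: Rsum_ge0 => p _; exact: pos_INR.
have := asum_ln2_le; have := ln_lt_2; have : 0 <= asum by apply: Rsum_ge0 => p _; exact: pos_INR.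
nra.
Qed.

Lemma omega_deviation_large :
  (2 ^ 24 <= P)%N -> Rabs (asum - lnsum / ln lnsum) <= 340000 * (lnsum / ln lnsum ^ 2).
Proof.
move=> P_large; have P_ge : 2 ^ 24 <= INR P by rewrite -INR_pow2; exact: INR_leq.
have lnsum_lo := lnsum_ge P_large; have lnsum_hi := lnsum_le.
have ln2_lo := ln_lt_2; have ln2_hi := ln2_le1.
have lnP_ge : 24 * ln 2 <= lnP.
  have := ln_le _ _ (pow_lt 2 24 Rlt_0_2) P_ge; rewrite ln_pow; last lra.
  by rewrite [INR 24]INR_IZR_INZ /=; lra.
have lnP_le : lnP <= 4 * ln 2 + ln lnsum.
  by have := ln_le_pow2_mul (INR P) lnsum 4; rewrite [INR 4]INR_IZR_INZ /=; lra.
have ln_lnsum_le : ln lnsum <= 6 * ln 2 + lnP.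
  by have := ln_le_pow2_mul lnsum (INR P) 6; rewrite [INR 6]INR_IZR_INZ /=; lra.
apply: (@deviation_bound_large _ _ lnP (INR P)); try lra.
- exact: lnsum_le_asum_lnP.
- exact: asum_lnP_sub_le.
Qed.

End ExponentProfile.

(** * Reduced numbers *)

Lemma Omega_eq_sum {n N} :
  (forall p, p \in primes n -> (p < N)%N) ->
  Omega n = (\sum_(0 <= p < N | prime p) logn p n)%N.
Proof. by move=> ltN; rewrite /Omega (big_primes_iota ltN). Qed.

Lemma ln_eq_sum_logn {n N} : (0 < n)%N ->
  (forall p, p \in primes n -> (p < N)%N) ->
  ln (INR n) = \big[Rplus/0]_(0 <= p < N | prime p) (INR (logn p n) * ln (INR p)).
Proof.
move=> n_gt0 ltN; rewrite {1}(prod_primes_iota n_gt0 ltN) ln_prod; last first.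
  by move=> p /prime_gt0 p_gt0; rewrite expn_gt0 p_gt0.
apply: eq_bigr => p /prime_gt0 p_gt0.
by rewrite INR_expn ln_pow //; exact: (@INR_ltn 0).
Qed.

Lemma least_odd_prime_nondvd {n} : (0 < n)%N -> exists P,
  [/\ prime P, (2 < P)%N, ~~ (P %| n) &
      forall q, prime q -> (2 < q)%N -> (q < P)%N -> q %| n].
Proof.
move=> n_gt0; pose Q p := [&& prime p, (2 < p)%N & ~~ (p %| n)].
have exQ : exists p, Q p.
  have [p lt_p p_pr] := prime_above n.+2.
  exists p; rewrite /Q p_pr /=; apply/andP; split; first lia.
  by apply/negP => /(dvdn_leq n_gt0); lia.
case: (ex_minnP exQ) => P /and3P[P_pr P_gt2 P_ndvd] P_min.
exists P; split => // q q_pr q_gt2 lt_qP; apply/negPn/negP => q_ndvd.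
by have := P_min q; rewrite /Q q_pr q_gt2 q_ndvd leqNgt lt_qP => /(_ isT).
Qed.

Section ReducedNumber.

Variables (n P : nat).
Hypothesis n_red : reduced n.
Hypothesis P_pr : prime P.
Hypothesis P_gt2 : (2 < P)%N.
Hypothesis P_ndvd : ~~ (P %| n).

Lemma logn_P_eq0 : logn P n = 0%N.
Proof. by apply/eqP; rewrite eqn0Ngt logn_gt0 mem_primes P_pr (proj1 n_red). Qed.

Lemma half_logn_ln_lt {p} : prime p -> (2 < p)%N ->
  INR ((logn p n).+1 %/ 2) * ln (INR p) < ln (INR P).
Proof.
move=> p_pr p_gt2; have [_ [red _]] := n_red.
have lnp_gt0 : 0 < ln (INR p) by have := ln_lt_2; have := ln2_le_ln_prime p_pr; lra.
have := red p P p_pr P_pr ltac:(lia) ltac:(lia); rewrite logn_P_eq0 => lt_ratio.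
have := Rmult_lt_compat_r _ _ _ lnp_gt0 lt_ratio.
by rewrite /Rdiv Rmult_assoc Rinv_l ?Rmult_1_r //; lra.
Qed.

Lemma logn_eq0_ge p : prime p -> (P <= p)%N -> logn p n = 0%N.
Proof.
move=> p_pr le_Pp; case: (eqVneq p P) => [-> | neq_pP]; first exact: logn_P_eq0.
apply/eqP; rewrite eqn0Ngt; apply/negP => logn_gt0.
have lt_Pp : (P < p)%N by rewrite ltn_neqAle eq_sym neq_pP.
have := half_logn_ln_lt p_pr (ltn_trans P_gt2 lt_Pp).
have := ln_increasing _ _ (@INR_ltn 0 _ (prime_gt0 P_pr)) (INR_ltn lt_Pp).
have : 1 <= INR ((logn p n).+1 %/ 2) by apply: (@INR_leq 1); rewrite divn_gt0.
have := ln_lt_2; have := ln2_le_ln_prime P_pr; nra.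
Qed.

Lemma primes_lt p : p \in primes n -> (p < P)%N.
Proof.
move=> p_in; have p_pr : prime p by move: p_in; rewrite mem_primes => /andP[].
rewrite ltnNge; apply/negP => le_Pp.
by move: p_in; rewrite -logn_gt0 logn_eq0_ge.
Qed.

Lemma logn_odd_le2 p : prime p -> (2 < p)%N -> (P < p * p)%N -> (logn p n <= 2)%N.
Proof.
move=> p_pr p_gt2 lt_Ppp; rewrite leqNgt; apply/negP => logn_gt2.
have : 2 <= INR ((logn p n).+1 %/ 2).
  by apply: (@INR_leq 2); rewrite leq_divRL //; lia.
have := half_logn_ln_lt p_pr p_gt2; have := ln_le_double_ln lt_Ppp.
have := ln_lt_2; have := ln2_le_ln_prime p_pr; nra.
Qed.

Lemma logn_ln_le p : prime p -> (p < P)%N ->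
  INR (logn p n) * ln (INR p) <= 3 + 2 * ln (INR P).
Proof.
move=> p_pr lt_pP; have lnP_ge0 := ln_INR_ge0 P.
case: (ltngtP p 2) => [lt_p2 | p_gt2 | ->]; first by have := prime_gt1 p_pr; lia.
  have := half_logn_ln_lt p_pr p_gt2; have := ln_INR_ge0 p.
  have : INR (logn p n) <= 2 * INR ((logn p n).+1 %/ 2).
    by rewrite -[2]/(INR 2) -mult_INR; apply: le_INR; lia.
  nra.
have [_ [_ two_pow]] := n_red.
have P_gt0 : 0 < INR P := @INR_ltn 0 _ (prime_gt0 P_pr).
have := two_pow P P_pr logn_P_eq0; rewrite INR_pow2 (_ : 8 = 2 ^ 3) => [lt_2P|]; last ring.
have := ln_le_pow2_mul _ _ 3 (pow_lt _ _ Rlt_0_2) (Rlt_le _ _ lt_2P).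
rewrite !ln_pow //; last lra.
rewrite [INR 3]INR_IZR_INZ [INR 2]INR_IZR_INZ /=.
by have := ln2_le1; lra.
Qed.

End ReducedNumber.

Theorem lemma3p15 :
  exists C : R, Rlt 0 C /\
    forall n : nat, reduced n -> (3 <= n)%N ->
      Rle (Rabs (Rminus (INR (Omega n)) (Rdiv (ln (INR n)) (ln (ln (INR n))))))
          (Rmult C (Rdiv (ln (INR n)) (pow (ln (ln (INR n))) 2))).
Proof.
set K := 43 * 2 ^ 24; have K_gt0 : 0 < K by rewrite /K; have := pow_lt 2 24 Rlt_0_2; lra.
exists (340000 + (2 * K ^ 2 + K)); split; first by have := pow_lt K 2 K_gt0; lra.
move=> n n_red n_ge3; have n_gt0 := proj1 n_red.
have L_gt1 : 1 < ln (INR n).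
  by have := ln_INR_le n_ge3; rewrite (_ : INR 3 = 3) /=; [have := ln3_gt1; lra | ring].
have [P [P_pr P_gt2 P_ndvd P_min]] := least_odd_prime_nondvd n_gt0.
have primes_lt_P := primes_lt _ _ n_red P_pr P_gt2 P_ndvd.
rewrite (ln_eq_sum_logn n_gt0 primes_lt_P) in L_gt1 *.
rewrite (Omega_eq_sum primes_lt_P) INR_sum.
set L := \big[Rplus/0]_(0 <= p < P | prime p) _ in L_gt1 *.
have u_ge0 : 0 <= L / ln L ^ 2.
  apply/Rlt_le/Rdiv_lt_0_compat; first lra.
  by apply: pow_lt; rewrite -ln_1; apply: ln_increasing; lra.
have exp_ln_le := logn_ln_le _ _ n_red P_pr P_gt2 P_ndvd.
case: (leqP (2 ^ 24) P) => [P_large | P_small].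
- have ge1 p : prime p -> (2 < p)%N -> (p < P)%N -> (1 <= logn p n)%N.
    by move=> p_pr p_gt2 lt_pP; rewrite logn_gt0 mem_primes p_pr n_gt0 P_min.
  have le2 p : prime p -> (2 < p)%N -> (p < P)%N -> (P < p * p)%N -> (logn p n <= 2)%N.
    by move=> p_pr p_gt2 _; exact: (logn_odd_le2 _ _ n_red P_pr P_gt2 P_ndvd).
  apply: Rle_trans (@omega_deviation_large P (logn^~ n) exp_ln_le ge1 le2 P_large) _.
  by apply: Rmult_le_compat_r => //; have := pow_lt K 2 K_gt0; lra.
- apply: Rle_trans (@omega_deviation_small P (logn^~ n) exp_ln_le P_small L_gt1) _.
  by apply: Rmult_le_compat_r => //; rewrite /K; lra.
Qed.
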